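(* Let $E,F$ be nondeterministic expressions, $P$ a probabilistic expression, $X$ a variable and $0<p<1$. Then $\mathrm{rec}\,X.(\tau.(\partial(X+E)\oplus_pP)+F)\ \simeq\ \mathrm{rec}\,X.(\tau.(\partial(X+E)\oplus_pP)+\tau.P+F)$.
   Context: Fix a set $\mathsf{Act}$ of actions containing $\tau$ and a set $\mathsf{Var}$ of variables. Nondeterministic expressions: $E ::= 0 \mid X \mid \alpha.P \mid \mathrm{rec}\,X.E \mid E + E$; probabilistic expressions: $P ::= \partial(E) \mid P \oplus_p P$ ($0<p<1$). $\mathrm{rec}\,X$ binds $X$; closed means no free variables; $E[\vec F/\vec X]$ is capture-avoiding substitution. Subdistributions $\mu$ over $S$: $\mu:S\to\mathbb R_{\ge0}$, $|\mu|=\sum\mu(s)\le1$; $\delta_s$ Dirac. Semantics: least relations with $\partial(E)\mapsto\delta_E$; $P\oplus_pQ\mapsto p\mu+(1-p)\nu$ if $P\mapsto\mu,Q\mapsto\nu$; $\alpha.P\xrightarrow{\alpha}\mu$ if $P\mapsto\mu$; $\mathrm{rec}\,X.E\xrightarrow{\alpha}\mu$ if $E[\mathrm{rec}\,X.E/X]\xrightarrow{\alpha}\mu$; $E+F\xrightarrow{\alpha}\mu$ and $F+E\xrightarrow{\alpha}\mu$ if $E\xrightarrow{\alpha}\mu$. Combined transitions on subdistributions: least relation with $\delta_E\xrightarrow{\alpha}\mu$ if $E\xrightarrow{\alpha}\mu$, closed under $\sum p_i\nu_i\xrightarrow{\alpha}\sum p_i\mu_i$ ($\nu_i\xrightarrow{\alpha}\mu_i$,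 $p_i\ge0$, $\sum p_i\le1$). A derivation is $(\mu_i^{\to},\mu_i^{\times})_{i\in\mathbb N}$ with $\mu_i^{\to}\xrightarrow{\tau}\mu^{\to}_{i+1}+\mu^{\times}_{i+1}$; $\mu\Rightarrow\nu$ iff a derivation has $\mu=\mu_0^{\to}+\mu_0^{\times}$, $\nu=\sum_i\mu_i^\times$. $\mu\xRightarrow{\alpha}\nu$ iff $\mu\Rightarrow\xrightarrow{\alpha}\Rightarrow\nu$; $\xRightarrow{\hat\alpha}$ is $\Rightarrow$ for $\alpha=\tau$, else $\xRightarrow{\alpha}$. Lifting of a relation to subdistributions: least relation with $\delta_E\mathcal R\delta_F$ for $E\mathcal RF$, closed under convex combinations with coefficients summing to at most 1. Weak bisimulation on closed expressions: if $E\mathcal RF$ and $E\xrightarrow{\alpha}\mu$ then $F\xRightarrow{\hat\alpha}\nu$ with $\mu\mathcal R\nu$, and symmetrically; $\approx$ is weak bisimilarity. For closed $E,F$: $E\simeq F$ iff $E\xrightarrow{\alpha}\mu$ implies $F\xRightarrow{\alpha}\nu$ with $\mu\approx\nu$ and $F\xrightarrow{\alpha}\nu$ implies $E\xRightarrow{\alpha}\mu$ with $\mu\approx\nu$. For open expressions with free variables $\vec X$: $E\simeq F$ iff $E[\vec G/\vec X]\simeq F[\vec G/\vec X]$ for all closed $\vec G$. *)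

From Stdlib Require Import Reals List ClassicalEpsilon.
Open Scope R_scope.
Set Implicit Arguments.

Inductive act (L : Type) : Type := tau | vis (l : L).
Arguments tau {L}.

Definition prob := { p : R | 0 < p < 1 }.

Inductive nexpr (L V : Type) : Type :=
| N0 : nexpr L V
| NVar : V -> nexpr L V
| NPre : act L -> pexpr L V -> nexpr L V
| NRec : V -> nexpr L V -> nexpr L V
| NSum : nexpr L V -> nexpr L V -> nexpr L V
with pexpr (L V : Type) : Type :=
| PDirac : nexpr L V -> pexpr L V
| PChoice : pexpr L V -> pexpr L V -> prob -> pexpr L V.
Arguments N0 {L V}. Arguments NVar {L V}. Arguments NPre {L V}. Arguments NRec {L V}. Arguments NSum {L V}. Arguments PDirac {L V}. Arguments PChoice {L V}.

Definition eqdec {T : Type} (x y : T) : bool :=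
  if excluded_middle_informative (x = y) then true else false.

Section Calculus.
Variables L V : Type.
Notation nexpr := (nexpr L V).
Notation pexpr := (pexpr L V).

Fixpoint freeN (x : V) (E : nexpr) : Prop :=
  match E with
  | N0 => False
  | NVar y => x = y
  | NPre a P => freeP x P
  | NRec y E' => x <> y /\ freeN x E'
  | NSum E1 E2 => freeN x E1 \/ freeN x E2
  end
with freeP (x : V) (P : pexpr) : Prop :=
  match P with
  | PDirac E => freeN x E
  | PChoice P1 P2 _ => freeP x P1 \/ freeP x P2
  end.

Definition closedN (E : nexpr) : Prop := forall x, ~ freeN x E.

(* Simultaneous substitution; [s y = Some G] replaces free y by G.
   Only ever used with closed G, so no capture can occur. *)
Fixpoint substN (s : V -> option nexpr) (E : nexpr) : nexpr :=
  match E with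
  | N0 => N0
  | NVar y => match s y with Some G => G | None => NVar y end
  | NPre a P => NPre a (substP s P)
  | NRec y E' => NRec y (substN (fun z => if eqdec z y then None else s z) E')
  | NSum E1 E2 => NSum (substN s E1) (substN s E2)
  end
with substP (s : V -> option nexpr) (P : pexpr) : pexpr :=
  match P with
  | PDirac E => PDirac (substN s E)
  | PChoice P1 P2 p => PChoice (substP s P1) (substP s P2) p
  end.

Definition subst1 (X : V) (G E : nexpr) : nexpr :=
  substN (fun z => if eqdec z X then Some G else None) E.

Definition dist := nexpr -> R.

Definition dirac (E : nexpr) : dist :=
  fun s => if eqdec s E then 1 else 0.

Definition subdist (d : dist) : Prop :=
  (forall s, 0 <= d s) /\
  (forall l : list nexpr, NoDup l -> fold_right (fun s acc => d s + acc) 0 l <= 1).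

Definition weights (p : nat -> R) : Prop :=
  (forall i, 0 <= p i) /\ (forall n, sum_f_R0 p n <= 1).

Definition is_comb (p : nat -> R) (nus : nat -> dist) (mu : dist) : Prop :=
  forall s, infinite_sum (fun i => p i * nus i s) (mu s).

Inductive psem : pexpr -> dist -> Prop :=
| ps_dirac E mu : (forall s, mu s = dirac E s) -> psem (PDirac E) mu
| ps_choice P Q (p : prob) mu nu rho :
    psem P mu -> psem Q nu ->
    (forall s, rho s = proj1_sig p * mu s + (1 - proj1_sig p) * nu s) ->
    psem (PChoice P Q p) rho.

Inductive step : nexpr -> act L -> dist -> Prop :=
| st_pre a P mu : psem P mu -> step (NPre a P) a mu
| st_rec X E a mu : step (subst1 X (NRec X E) E) a mu -> step (NRec X E) a mu
| st_suml E F a mu : step E a mu -> step (NSum E F) a mu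
| st_sumr E F a mu : step F a mu -> step (NSum E F) a mu.

Inductive ctrans : dist -> act L -> dist -> Prop :=
| ct_base E a d mu : (forall s, d s = dirac E s) -> step E a mu -> ctrans d a mu
| ct_comb (p : nat -> R) (nus mus : nat -> dist) a nu mu :
    weights p ->
    (forall i, 0 < p i -> ctrans (nus i) a (mus i)) ->
    is_comb p nus nu -> is_comb p mus mu -> ctrans nu a mu.

Definition wtau (mu nu : dist) : Prop :=
  exists mt mx : nat -> dist,
    (forall i, subdist (mt i) /\ subdist (mx i)) /\
    (forall i, ctrans (mt i) tau (fun s => mt (S i) s + mx (S i) s)) /\
    (forall s, mu s = mt 0%nat s + mx 0%nat s) /\
    (forall s, infinite_sum (fun i => mx i s) (nu s)).

Definition wtrans (mu : dist) (a : act L) (nu : dist) : Prop :=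
  exists m1 m2, wtau mu m1 /\ ctrans m1 a m2 /\ wtau m2 nu.

Definition wtrans_hat (mu : dist) (a : act L) (nu : dist) : Prop :=
  match a with tau => wtau mu nu | vis _ => wtrans mu a nu end.

Inductive lift (Rel : nexpr -> nexpr -> Prop) : dist -> dist -> Prop :=
| lift_base E F d1 d2 : Rel E F ->
    (forall s, d1 s = dirac E s) -> (forall s, d2 s = dirac F s) -> lift Rel d1 d2
| lift_comb (p : nat -> R) (mus nus : nat -> dist) mu nu :
    weights p ->
    (forall i, 0 < p i -> lift Rel (mus i) (nus i)) ->
    is_comb p mus mu -> is_comb p nus nu -> lift Rel mu nu.

Definition is_wbisim (Rel : nexpr -> nexpr -> Prop) : Prop :=
  forall E F, Rel E F ->
    closedN E /\ closedN F /\
    (forall a mu, step E a mu -> exists nu, wtrans_hat (dirac F) a nu /\ lift Rel mu nu) /\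
    (forall a nu, step F a nu -> exists mu, wtrans_hat (dirac E) a mu /\ lift Rel mu nu).

Definition wbisim (E F : nexpr) : Prop :=
  exists Rel, is_wbisim Rel /\ Rel E F.

Definition rcong_closed (E F : nexpr) : Prop :=
  (forall a mu, step E a mu -> exists nu, wtrans (dirac F) a nu /\ lift wbisim mu nu) /\
  (forall a nu, step F a nu -> exists mu, wtrans (dirac E) a mu /\ lift wbisim mu nu).

(* for open expressions: all closed instantiations of the variables
   (for closed E, F this coincides with rcong_closed) *)
Definition rcong (E F : nexpr) : Prop :=
  forall sigma : V -> nexpr, (forall y, closedN (sigma y)) ->
    rcong_closed (substN (fun y => Some (sigma y)) E)
                 (substN (fun y => Some (sigma y)) F).

End Calculus.

(* Substituting closed expressions for the variables other than X turns the two
   sides into closed A = rec X.(tau.Q + F) and B = rec X.(tau.Q + tau.P + F),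
   where Q = d(X + E) (+)_p P.  Relating every closed C[A,...,A] to C[B,...,B]
   gives a weak bisimulation: a move of one side is matched by the same move of
   the other, except the extra move B --tau--> [P].  A answers that one with its
   move A --tau--> p.delta(A + E) + (1-p).[P]; since A + E makes the same move
   again, iterating it stops in [P] with total mass sum_i p^i (1-p) = 1.  Each
   initial move is answered by at least one genuine move, so A and B are rooted
   weakly congruent. *)

From Pilot Require Import Defs.
From Stdlib Require Import Reals Lra Lia List ClassicalEpsilon.
Open Scope R_scope.

Lemma eqdec_spec {T : Type} (x y : T) :
  (x = y /\ eqdec x y = true) \/ (x <> y /\ eqdec x y = false).
Proof. unfold eqdec; destruct (excluded_middle_informative (x = y)); auto. Qed.

Lemma eqdec_refl {T : Type} (x : T) : eqdec x x = true.
Proof. unfold eqdec; destruct (excluded_middle_informative (x = x)); congruence. Qed.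

Lemma infinite_sum_eventually (f : nat -> R) (l : R) :
  (exists N, forall n, (n >= N)%nat -> sum_f_R0 f n = l) -> infinite_sum f l.
Proof.
  intros [N HN] eps Heps. exists N. intros n Hn.
  rewrite HN by exact Hn. rewrite Rdist_eq. lra.
Qed.

Lemma infinite_sum_ext (f g : nat -> R) (l : R) :
  (forall n, f n = g n) -> infinite_sum f l -> infinite_sum g l.
Proof.
  intros Hfg H eps Heps. destruct (H eps Heps) as [N HN]. exists N. intros n Hn.
  rewrite <- (sum_eq f g n) by auto. auto.
Qed.

Lemma infinite_sum_scal_r (f : nat -> R) (l c : R) :
  infinite_sum f l -> infinite_sum (fun n => f n * c) (l * c).
Proof.
  intros H.
  assert (Hc : Un_cv (fun _ => c) c).
  { intros eps Heps. exists 0%nat. intros. rewrite Rdist_eq. lra. }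
  intros eps Heps. destruct (CV_mult _ _ _ _ H Hc eps Heps) as [N HN]. exists N.
  intros n Hn. rewrite <- scal_sum, Rmult_comm. auto.
Qed.

Lemma infinite_sum_shift (f : nat -> R) (l : R) :
  infinite_sum f l -> infinite_sum (fun i => match i with O => 0 | S k => f k end) l.
Proof.
  intros H.
  assert (Hs : forall n,
    sum_f_R0 (fun i => match i with O => 0 | S k => f k end) (S n) = sum_f_R0 f n).
  { induction n; simpl in *; [ring | rewrite IHn; ring]. }
  intros eps Heps. destruct (H eps Heps) as [N HN]. exists (S N). intros [|n] Hn.
  - lia.
  - rewrite Hs. apply HN. lia.
Qed.

Lemma infinite_sum_geometric (p x : R) :
  0 <= p < 1 -> infinite_sum (fun i => p ^ i * (1 - p) * x) x.
Proof.
  intros Hp.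
  assert (Hgeom := GP_infinite p ltac:(rewrite Rabs_pos_eq; lra)). unfold Pser in Hgeom.
  assert (Hsum := infinite_sum_scal_r _ _ ((1 - p) * x) Hgeom).
  replace (/ (1 - p) * ((1 - p) * x)) with x in Hsum by (field; lra).
  eapply infinite_sum_ext; [| exact Hsum]. intros n; simpl; ring.
Qed.

Definition two_point (a b : R) : nat -> R :=
  fun i => match i with O => a | 1%nat => b | _ => 0 end.

Lemma infinite_sum_two_point (a b : R) (f : nat -> R) :
  infinite_sum (fun i => two_point a b i * f i) (a * f 0%nat + b * f 1%nat).
Proof.
  apply infinite_sum_eventually. exists 1%nat.
  intros n Hn. induction n as [|n IH]; [lia |].
  destruct n as [|n]; [simpl; ring |].
  simpl in *. rewrite IH by lia. ring.
Qed.

Lemma weights_two_point (a b : R) : 0 <= a -> 0 <= b -> a + b <= 1 -> weights (two_point a b).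
Proof.
  intros Ha Hb Hab. split.
  - intros [|[|i]]; simpl; lra.
  - intros n. induction n as [|[|n] IH]; simpl in *; lra.
Qed.

Section Semantics.
Context {L V : Type}.
Notation nexpr := (nexpr L V).
Notation pexpr := (pexpr L V).
Notation dist := (Defs.dist L V).

Definition zero_dist : dist := fun _ => 0.

Definition mass (d : dist) (l : list nexpr) : R := fold_right (fun s acc => d s + acc) 0 l.

Lemma mass_lin2 (h f g : dist) (a b : R) (l : list nexpr) :
  (forall s, h s = a * f s + b * g s) -> mass h l = a * mass f l + b * mass g l.
Proof. intros H. induction l as [|s l IH]; simpl; [ring |]. rewrite IH, H. ring. Qed.

Lemma mass_ge0 (d : dist) (l : list nexpr) : (forall s, 0 <= d s) -> 0 <= mass d l.
Proof. intros H. induction l as [|s l IH]; simpl; [lra |]. specialize (H s). lra. Qed.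

Lemma mass_dirac_notin (E : nexpr) (l : list nexpr) : ~ In E l -> mass (dirac E) l = 0.
Proof.
  induction l as [|s l IH]; simpl; intros Hnin; [reflexivity |].
  rewrite IH by tauto. unfold dirac.
  destruct (eqdec_spec s E) as [[-> _] | [_ ->]]; [tauto | ring].
Qed.

Lemma subdist_convex2 (h f g : dist) (a b : R) :
  subdist f -> subdist g -> 0 <= a -> 0 <= b -> a + b <= 1 ->
  (forall s, h s = a * f s + b * g s) -> subdist h.
Proof.
  intros [Hf0 Hf1] [Hg0 Hg1] Ha Hb Hab H. split.
  - intros s. rewrite H. specialize (Hf0 s). specialize (Hg0 s). nra.
  - intros l Hl. change (mass h l <= 1). rewrite (mass_lin2 h f g a b l H).
    specialize (Hf1 l Hl). specialize (Hg1 l Hl).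
    pose proof (mass_ge0 f l Hf0). pose proof (mass_ge0 g l Hg0).
    unfold mass in *. nra.
Qed.

Lemma subdist_scale (h f : dist) (a : R) :
  subdist f -> 0 <= a <= 1 -> (forall s, h s = a * f s) -> subdist h.
Proof.
  intros Hf Ha H. apply (subdist_convex2 h f f a 0); auto; try lra.
  intros s. rewrite H. ring.
Qed.

Lemma subdist_zero : subdist zero_dist.
Proof. unfold zero_dist. split; [intros s; lra | intros l _; induction l; simpl; lra]. Qed.

Lemma subdist_dirac (E : nexpr) : subdist (dirac E).
Proof.
  split.
  - intros s. unfold dirac. destruct (eqdec s E); lra.
  - intros l Hl. change (mass (dirac E) l <= 1).
    induction Hl as [|s l Hnin Hl IH]; [simpl; lra |].
    change (dirac E s + mass (dirac E) l <= 1).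
    unfold dirac at 1. destruct (eqdec_spec s E) as [[-> ->] | [_ ->]].
    + rewrite mass_dirac_notin by exact Hnin. lra.
    + lra.
Qed.

Lemma psem_total (P : pexpr) : exists mu, psem P mu.
Proof.
  induction P as [E | P1 [mu1 H1] P2 [mu2 H2] p].
  - exists (dirac E). constructor. reflexivity.
  - eexists. econstructor; eauto. reflexivity.
Qed.

Lemma psem_unique (P : pexpr) (mu nu : dist) : psem P mu -> psem P nu -> forall s, mu s = nu s.
Proof.
  intros H. revert nu.
  induction H as [E mu Hmu | P1 P2 p mu1 mu2 rho H1 IH1 H2 IH2 Hrho]; intros nu Hnu s.
  - inversion Hnu as [E' nu' Hnu' |]; subst. rewrite Hmu, Hnu'. reflexivity.
  - inversion Hnu as [| P1' P2' p' nu1 nu2 nu' Hnu1 Hnu2 Hnu']; subst.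
    rewrite Hrho, Hnu', (IH1 _ Hnu1), (IH2 _ Hnu2). reflexivity.
Qed.

Lemma psem_subdist (P : pexpr) (mu : dist) : psem P mu -> subdist mu.
Proof.
  induction 1 as [E mu Hmu | P1 P2 [p Hp] mu1 mu2 rho _ IH1 _ IH2 Hrho].
  - apply (subdist_scale mu (dirac E) 1); [apply subdist_dirac | lra |].
    intros s. rewrite Hmu. ring.
  - apply (subdist_convex2 rho mu1 mu2 p (1 - p)); auto; simpl in *; lra.
Qed.

Lemma step_subdist (G : nexpr) (a : act L) (mu : dist) : step G a mu -> subdist mu.
Proof. induction 1; eauto using psem_subdist. Qed.

Definition pick2 (f g : dist) : nat -> dist := fun i => match i with O => f | _ => g end.

Lemma is_comb_two_point (h f g : dist) (a b : R) :
  (forall s, h s = a * f s + b * g s) -> is_comb (two_point a b) (pick2 f g) h.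
Proof. intros H s. rewrite H. exact (infinite_sum_two_point a b (fun i => pick2 f g i s)). Qed.

Lemma ctrans_scale (c : R) (d mu d' mu' : dist) (a : act L) :
  0 <= c <= 1 -> (0 < c -> ctrans d a mu) ->
  (forall s, d' s = c * d s) -> (forall s, mu' s = c * mu s) -> ctrans d' a mu'.
Proof.
  intros Hc Hct Hd Hmu.
  apply (@ct_comb _ _ (two_point c 0) (pick2 d d) (pick2 mu mu)).
  - apply weights_two_point; lra.
  - intros [|[|i]] Hpos; simpl in Hpos; [auto | lra | lra].
  - apply is_comb_two_point. intros s. rewrite Hd. ring.
  - apply is_comb_two_point. intros s. rewrite Hmu. ring.
Qed.

Lemma ctrans_ext (d mu mu' : dist) (a : act L) :
  ctrans d a mu -> (forall s, mu' s = mu s) -> ctrans d a mu'.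
Proof.
  intros H Hmu. apply (ctrans_scale 1 d mu); auto; try lra.
  - intros s. ring.
  - intros s. rewrite Hmu. ring.
Qed.

Lemma wtau_refl (d : dist) : subdist d -> wtau d d.
Proof.
  intros Hd. exists (fun _ => zero_dist), (pick2 d zero_dist).
  split; [| split; [| split]].
  - intros [|i]; simpl; auto using subdist_zero.
  - intros i. apply (ctrans_scale 0 zero_dist zero_dist); unfold zero_dist; simpl; intros; lra.
  - intros s. unfold zero_dist. simpl. ring.
  - intros s. apply infinite_sum_eventually. exists 0%nat. intros n _.
    induction n as [|n IH]; simpl in *; [| rewrite IH; unfold zero_dist]; ring.
Qed.

Lemma wtau_cons (d d' d'' : dist) :
  subdist d -> ctrans d tau d' -> wtau d' d'' -> wtau d d''.
Proof.
  intros Hd Hct (mt & mx & Hsub & Hmt & H0 & Hsum).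
  exists (fun i => match i with O => d | S k => mt k end),
         (fun i => match i with O => zero_dist | S k => mx k end).
  split; [| split; [| split]].
  - intros [|i]; auto using subdist_zero.
  - intros [|i]; [apply (ctrans_ext d d'); auto | apply Hmt].
  - intros s. unfold zero_dist. ring.
  - intros s. eapply infinite_sum_ext; [| exact (infinite_sum_shift _ _ (Hsum s))].
    intros [|n]; reflexivity.
Qed.

(* The derivation keeps the mass [p^(i+1)] on [G] moving and stops
   [p^i (1-p) mu] at stage [i]. *)
Lemma wtau_geometric (G : nexpr) (p : R) (rho mu : dist) :
  0 < p < 1 -> subdist mu -> step G tau rho ->
  (forall s, rho s = p * dirac G s + (1 - p) * mu s) -> wtau rho mu.
Proof.
  intros Hp Hmu Hstep Hrho.
  assert (Hpow : forall n, 0 <= p ^ n <= 1).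
  { induction n; simpl; nra. }
  exists (fun i s => p ^ S i * dirac G s), (fun i s => p ^ i * (1 - p) * mu s).
  split; [| split; [| split]].
  - intros i. split.
    + apply (subdist_scale _ (dirac G) (p ^ S i)); auto using subdist_dirac.
    + apply (subdist_scale _ mu (p ^ i * (1 - p))); auto.
      specialize (Hpow i). nra.
  - intros i. apply (ctrans_scale (p ^ S i) (dirac G) rho); auto.
    + intros _. apply (ct_base (E := G)); auto.
    + intros s. rewrite Hrho. simpl. ring.
  - intros s. rewrite Hrho. simpl. ring.
  - intros s. apply infinite_sum_geometric. lra.
Qed.

Lemma step_wtau (G : nexpr) (rho mu : dist) :
  step G tau rho -> wtau rho mu -> wtau (dirac G) mu.
Proof.
  intros Hstep Hw. apply (wtau_cons _ rho); auto using subdist_dirac.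
  apply (ct_base (E := G)); auto.
Qed.

Lemma step_wtrans (G : nexpr) (a : act L) (rho mu : dist) :
  step G a rho -> wtau rho mu -> wtrans (dirac G) a mu.
Proof.
  intros Hstep Hw. exists (dirac G), rho.
  split; [apply wtau_refl, subdist_dirac | split; auto].
  apply (ct_base (E := G)); auto.
Qed.

Lemma step_wtrans_hat (G : nexpr) (a : act L) (rho mu : dist) :
  step G a rho -> wtau rho mu -> wtrans_hat (dirac G) a mu.
Proof. intros Hstep Hw. destruct a; simpl; eauto using step_wtau, step_wtrans. Qed.

Lemma lift_mono (R1 R2 : nexpr -> nexpr -> Prop) (mu nu : dist) :
  (forall G H, R1 G H -> R2 G H) -> lift R1 mu nu -> lift R2 mu nu.
Proof. intros H. induction 1; [eapply lift_base | eapply lift_comb]; eauto. Qed.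

End Semantics.

Scheme nexpr_pexpr_ind := Induction for nexpr Sort Prop
with pexpr_nexpr_ind := Induction for pexpr Sort Prop.
Combined Scheme expr_mutind from nexpr_pexpr_ind, pexpr_nexpr_ind.

Section Syntax.
Context {L V : Type}.
Notation nexpr := (nexpr L V).
Notation pexpr := (pexpr L V).

Definition closedP (P : pexpr) : Prop := forall x, ~ freeP x P.

Definition subst_one (Y : V) (H : nexpr) : V -> option nexpr :=
  fun z => if eqdec z Y then Some H else None.

Lemma subst_free_id :
  (forall (G : nexpr) s, (forall y, freeN y G -> s y = None) -> substN s G = G) /\
  (forall (P : pexpr) s, (forall y, freeP y P -> s y = None) -> substP s P = P).
Proof.
  apply (expr_mutind L V
    (fun G => forall s, (forall y, freeN y G -> s y = None) -> substN s G = G)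
    (fun P => forall s, (forall y, freeP y P -> s y = None) -> substP s P = P));
    simpl.
  - reflexivity.
  - intros v s Hs. rewrite Hs; reflexivity.
  - intros a P IH s Hs. f_equal. auto.
  - intros v G IH s Hs. f_equal. apply IH.
    intros y Hy. destruct (eqdec_spec y v) as [[_ ->] | [Hne ->]]; auto.
  - intros G1 IH1 G2 IH2 s Hs. f_equal; auto.
  - intros G IH s Hs. f_equal. auto.
  - intros P1 IH1 P2 IH2 p s Hs. f_equal; auto.
Qed.

Lemma closedN_sum_inv (G H : nexpr) : closedN (NSum G H) -> closedN G /\ closedN H.
Proof. intros Hc. split; intros y Hy; apply (Hc y); simpl; auto. Qed.

Lemma closedN_subst_free_id (G : nexpr) (s : V -> option nexpr) : closedN G -> substN s G = G.
Proof. intros Hc. apply subst_free_id. intros y Hy. destruct (Hc y Hy). Qed.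

Lemma free_subst_closed_images :
  (forall (G : nexpr) s, (forall z H, s z = Some H -> closedN H) ->
     forall y, freeN y (substN s G) -> freeN y G /\ s y = None) /\
  (forall (P : pexpr) s, (forall z H, s z = Some H -> closedN H) ->
     forall y, freeP y (substP s P) -> freeP y P /\ s y = None).
Proof.
  apply (expr_mutind L V
    (fun G => forall s, (forall z H, s z = Some H -> closedN H) ->
       forall y, freeN y (substN s G) -> freeN y G /\ s y = None)
    (fun P => forall s, (forall z H, s z = Some H -> closedN H) ->
       forall y, freeP y (substP s P) -> freeP y P /\ s y = None));
    simpl.
  - intros s Hs y [].
  - intros v s Hs y Hy. destruct (s v) as [K |] eqn:Hv.
    + destruct (Hs v K Hv y Hy).
    + simpl in Hy. subst. split; auto.
  - intros a P IH s Hs y Hy. exact (IH s Hs y Hy).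
  - intros v G IH s Hs y [Hne Hy].
    edestruct IH as [Hfree Hnone]; [| exact Hy |].
    + intros z K HK. simpl in HK. destruct (eqdec z v); [discriminate | eauto].
    + destruct (eqdec_spec y v) as [[Heq _] | [_ Hneq]]; [contradiction |].
      cbv beta in Hnone. rewrite Hneq in Hnone. auto.
  - intros G1 IH1 G2 IH2 s Hs y [Hy | Hy];
      [destruct (IH1 s Hs y Hy) | destruct (IH2 s Hs y Hy)]; auto.
  - intros G IH s Hs y Hy. exact (IH s Hs y Hy).
  - intros P1 IH1 P2 IH2 p s Hs y [Hy | Hy];
      [destruct (IH1 s Hs y Hy) | destruct (IH2 s Hs y Hy)]; auto.
Qed.

Lemma closedN_subst_all (sigma : V -> nexpr) (G : nexpr) :
  (forall y, closedN (sigma y)) -> closedN (substN (fun y => Some (sigma y)) G).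
Proof.
  intros Hsigma y Hy.
  destruct (proj1 free_subst_closed_images G (fun y => Some (sigma y))) with (y := y)
    as [_ Hnone]; [| exact Hy | discriminate].
  intros z K HK. injection HK as <-. apply Hsigma.
Qed.

Lemma closedN_subst_unfold (Y : V) (G H : nexpr) :
  closedN (NRec Y G) -> closedN H -> closedN (substN (subst_one Y H) G).
Proof.
  intros HG HH y Hy.
  destruct (proj1 free_subst_closed_images G (subst_one Y H)) with (y := y)
    as [Hfree Hnone]; auto.
  - intros z K. unfold subst_one.
    destruct (eqdec z Y); intros HK; [injection HK as <-; exact HH | discriminate].
  - apply (HG y). unfold subst_one in Hnone. simpl.
    destruct (eqdec_spec y Y) as [[_ Heq] | [Hne _]].
    + rewrite Heq in Hnone. discriminate.
    + split; assumption.
Qed.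

End Syntax.

Section Contexts.
Context {L V : Type}.
Notation nexpr := (nexpr L V).
Notation pexpr := (pexpr L V).
Notation dist := (Defs.dist L V).
Variables A B : nexpr.
Hypothesis closed_A : closedN A.
Hypothesis closed_B : closedN B.

(* [ctxN G1 G2]: [G1] and [G2] are one context with some holes filled by [A] in
   [G1] and by [B] in [G2]. *)
Inductive ctxN : nexpr -> nexpr -> Prop :=
| ctx_hole : ctxN A B
| ctx_nil : ctxN Defs.N0 Defs.N0
| ctx_var y : ctxN (NVar y) (NVar y)
| ctx_pre a P1 P2 : ctxP P1 P2 -> ctxN (NPre a P1) (NPre a P2)
| ctx_rec Y G1 G2 : ctxN G1 G2 -> ctxN (NRec Y G1) (NRec Y G2)
| ctx_sum G1 G2 H1 H2 : ctxN G1 G2 -> ctxN H1 H2 -> ctxN (NSum G1 H1) (NSum G2 H2)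
with ctxP : pexpr -> pexpr -> Prop :=
| ctx_dirac G1 G2 : ctxN G1 G2 -> ctxP (PDirac G1) (PDirac G2)
| ctx_choice P1 P2 Q1 Q2 q :
    ctxP P1 Q1 -> ctxP P2 Q2 -> ctxP (PChoice P1 P2 q) (PChoice Q1 Q2 q).

Scheme ctxN_ctxP_ind := Induction for ctxN Sort Prop
with ctxP_ctxN_ind := Induction for ctxP Sort Prop.
Combined Scheme ctx_mutind from ctxN_ctxP_ind, ctxP_ctxN_ind.

Lemma ctx_refl : (forall G : nexpr, ctxN G G) /\ (forall P : pexpr, ctxP P P).
Proof.
  apply (expr_mutind L V (fun G => ctxN G G) (fun P => ctxP P P));
    intros; constructor; auto.
Qed.

Definition ctx_subst (s1 s2 : V -> option nexpr) : Prop :=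
  forall z, (s1 z = None /\ s2 z = None) \/
            exists H1 H2, s1 z = Some H1 /\ s2 z = Some H2 /\ ctxN H1 H2.

Lemma ctx_subst_one (Y : V) (H1 H2 : nexpr) :
  ctxN H1 H2 -> ctx_subst (subst_one Y H1) (subst_one Y H2).
Proof.
  intros H z. unfold subst_one. destruct (eqdec z Y); [right; exists H1, H2 | left]; auto.
Qed.

Lemma ctx_subst_congr :
  (forall G1 G2, ctxN G1 G2 -> forall s1 s2, ctx_subst s1 s2 ->
     ctxN (substN s1 G1) (substN s2 G2)) /\
  (forall P1 P2, ctxP P1 P2 -> forall s1 s2, ctx_subst s1 s2 ->
     ctxP (substP s1 P1) (substP s2 P2)).
Proof.
  apply (ctx_mutind
    (fun G1 G2 _ => forall s1 s2, ctx_subst s1 s2 -> ctxN (substN s1 G1) (substN s2 G2))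
    (fun P1 P2 _ => forall s1 s2, ctx_subst s1 s2 -> ctxP (substP s1 P1) (substP s2 P2)));
    simpl.
  - intros s1 s2 _. rewrite !closedN_subst_free_id by assumption. constructor.
  - intros s1 s2 _. constructor.
  - intros y s1 s2 Hs.
    destruct (Hs y) as [[-> ->] | (H1 & H2 & -> & -> & Hctx)]; [constructor | exact Hctx].
  - intros a P1 P2 _ IH s1 s2 Hs. constructor. auto.
  - intros Y G1 G2 _ IH s1 s2 Hs. constructor. apply IH.
    intros z. destruct (eqdec z Y); [left | apply Hs]; auto.
  - intros G1 G2 H1 H2 _ IH1 _ IH2 s1 s2 Hs. constructor; auto.
  - intros G1 G2 _ IH s1 s2 Hs. constructor. auto.
  - intros P1 P2 Q1 Q2 q _ IH1 _ IH2 s1 s2 Hs. constructor; auto.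
Qed.

Definition ctx_closed (G1 G2 : nexpr) : Prop := ctxN G1 G2 /\ closedN G1 /\ closedN G2.

Lemma psem_ctx_lift (P1 P2 : pexpr) (mu nu : dist) :
  psem P1 mu -> psem P2 nu -> ctxP P1 P2 -> closedP P1 -> closedP P2 ->
  lift ctx_closed mu nu.
Proof.
  intros Hmu. revert P2 nu.
  induction Hmu as [G1 mu Hmu | P1 P1' [p Hp] mu1 mu1' mu _ IH1 _ IH1' Hmu];
    intros P2 nu Hnu Hctx Hc1 Hc2.
  - inversion Hctx as [? G2 HG |]; subst.
    inversion Hnu as [? ? Hnu' |]; subst.
    apply (lift_base ctx_closed G1 G2); auto.
    split; [exact HG | split; intros y Hy; [apply (Hc1 y) | apply (Hc2 y)]; exact Hy].
  - inversion Hctx as [| ? ? Q Q' ? HQ HQ']; subst.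
    inversion Hnu as [| ? ? ? nu1 nu1' ? Hnu1 Hnu1' Hnu']; subst.
    apply (@lift_comb _ _ ctx_closed (two_point p (1 - p)) (pick2 mu1 mu1') (pick2 nu1 nu1')).
    + apply weights_two_point; lra.
    + intros [|[|i]] Hpos; simpl in Hpos.
      * apply (IH1 Q); auto; intros y Hy; [apply (Hc1 y) | apply (Hc2 y)]; simpl; auto.
      * apply (IH1' Q'); auto; intros y Hy; [apply (Hc1 y) | apply (Hc2 y)]; simpl; auto.
      * lra.
    + apply is_comb_two_point. exact Hmu.
    + apply is_comb_two_point. exact Hnu'.
Qed.

End Contexts.

Section Unfolding.
Context {L V : Type}.
Notation nexpr := (nexpr L V).
Notation pexpr := (pexpr L V).
Notation dist := (Defs.dist L V).
Variables (X : V) (E F : nexpr) (P : pexpr) (pr : prob).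

Definition Q : pexpr := PChoice (PDirac (NSum (NVar X) E)) P pr.
Definition A : nexpr := NRec X (NSum (NPre tau Q) F).
Definition B : nexpr := NRec X (NSum (NSum (NPre tau Q) (NPre tau P)) F).
Hypothesis closed_A : closedN A.
Hypothesis closed_B : closedN B.

Notation Rel := (ctx_closed A B).
Notation Ea := (substN (subst_one X A) E).
Notation Fa := (substN (subst_one X A) F).
Notation Pa := (substP (subst_one X A) P).
Notation Qa := (substP (subst_one X A) Q).
Notation Fb := (substN (subst_one X B) F).
Notation Pb := (substP (subst_one X B) P).
Notation Qb := (substP (subst_one X B) Q).

Lemma step_A_intro (a : act L) (mu : dist) : step (NSum (NPre tau Qa) Fa) a mu -> step A a mu.
Proof. intros H. apply st_rec, H. Qed.

Lemma step_B_intro (a : act L) (mu : dist) :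
  step (NSum (NSum (NPre tau Qb) (NPre tau Pb)) Fb) a mu -> step B a mu.
Proof. intros H. apply st_rec, H. Qed.

Lemma closed_A_unfold : closedN (NSum (NPre tau Qa) Fa).
Proof. exact (closedN_subst_unfold X _ A closed_A closed_A). Qed.

Lemma closed_B_unfold : closedN (NSum (NSum (NPre tau Qb) (NPre tau Pb)) Fb).
Proof. exact (closedN_subst_unfold X _ B closed_B closed_B). Qed.

Lemma ctx_unfold :
  ctxP A B Qa Qb /\ ctxP A B Pa Pb /\ ctxN A B Fa Fb.
Proof.
  pose proof (ctx_subst_one A B X A B (ctx_hole A B)) as Hs.
  destruct (ctx_subst_congr A B closed_A closed_B) as [HN HP].
  destruct (ctx_refl A B) as [HreflN HreflP].
  split; [| split]; [apply HP | apply HP | apply HN]; auto.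
Qed.

Lemma Qa_eq : Qa = PChoice (PDirac (NSum A Ea)) Pa pr.
Proof. unfold Q. simpl. unfold subst_one at 1. rewrite eqdec_refl. reflexivity. Qed.

Lemma step_A_tau (rho : dist) : psem Qa rho -> step A tau rho.
Proof. intros H. apply step_A_intro, st_suml. constructor. exact H. Qed.

Lemma wtau_Qa_Pa (rho mu : dist) : psem Qa rho -> psem Pa mu -> wtau rho mu.
Proof.
  intros Hrho Hmu.
  pose proof Hrho as HQ. rewrite Qa_eq in HQ.
  inversion HQ as [| ? ? ? d mu' ? Hd Hmu' Hrho']; subst.
  inversion Hd as [? ? Hdirac |]; subst.
  destruct pr as [p Hp]. simpl in Hrho'.
  apply (wtau_geometric (NSum A Ea) p rho mu Hp).
  - exact (psem_subdist _ _ Hmu).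
  - apply st_suml, step_A_tau, Hrho.
  - intros s. rewrite Hrho', Hdirac, (psem_unique _ _ _ Hmu' Hmu). reflexivity.
Qed.

Lemma ctx_step_forward (G1 : nexpr) (a : act L) (mu : dist) :
  step G1 a mu -> forall G2, ctxN A B G1 G2 -> closedN G1 -> closedN G2 ->
  exists nu, step G2 a nu /\ lift Rel mu nu.
Proof.
  destruct ctx_unfold as (HQ & _ & HF).
  induction 1 as [a P1 mu Hmu | Y G1 a mu Hst IH | G1 H1 a mu Hst IH | G1 H1 a mu Hst IH];
    intros G2 Hctx Hc1 Hc2.
  - inversion Hctx as [| | | ? ? P2 HP | |]; subst.
    destruct (psem_total P2) as [nu Hnu]. exists nu. split; [constructor; exact Hnu |].
    apply (psem_ctx_lift A B P1 P2); auto.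
  - inversion Hctx as [| | | | ? ? G2' HG |]; subst.
    + destruct (IH (NSum (NPre tau Qb) Fb)) as (nu & Hnu & Hlift).
      * constructor; [constructor |]; assumption.
      * exact closed_A_unfold.
      * intros y Hy. apply (closed_B_unfold y). simpl in *. tauto.
      * exists nu. split; [| exact Hlift]. apply step_B_intro.
        inversion Hnu; subst; [apply st_suml, st_suml | apply st_sumr]; assumption.
    + destruct (IH (substN (subst_one Y (NRec Y G2')) G2')) as (nu & Hnu & Hlift).
      * apply (ctx_subst_congr A B closed_A closed_B); [exact HG |].
        apply ctx_subst_one. constructor. exact HG.
      * apply closedN_subst_unfold; assumption.
      * apply closedN_subst_unfold; assumption.
      * exists nu. split; [apply st_rec, Hnu | exact Hlift].
  - inversion Hctx as [| | | | | ? G2' ? H2' HG HH]; subst.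
    destruct (IH G2' HG (proj1 (closedN_sum_inv _ _ Hc1)) (proj1 (closedN_sum_inv _ _ Hc2)))
      as (nu & Hnu & Hlift).
    exists nu. split; [apply st_suml, Hnu | exact Hlift].
  - inversion Hctx as [| | | | | ? G2' ? H2' HG HH]; subst.
    destruct (IH H2' HH (proj2 (closedN_sum_inv _ _ Hc1)) (proj2 (closedN_sum_inv _ _ Hc2)))
      as (nu & Hnu & Hlift).
    exists nu. split; [apply st_sumr, Hnu | exact Hlift].
Qed.

Definition extra_tau_match (G1 : nexpr) (nu : dist) : Prop :=
  (exists rho, psem Qa rho /\ step G1 tau rho) /\ (exists mu, psem Pa mu /\ lift Rel mu nu).

Definition backward_match (G1 : nexpr) (a : act L) (nu : dist) : Prop :=
  (exists mu, step G1 a mu /\ lift Rel mu nu) \/ (a = tau /\ extra_tau_match G1 nu).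

Lemma backward_match_mono (G G' : nexpr) (a : act L) (nu : dist) :
  (forall b rho, step G b rho -> step G' b rho) ->
  backward_match G a nu -> backward_match G' a nu.
Proof.
  intros Hsteps [(mu & Hmu & Hlift) | (Ha & (rho & HQ & Hrho) & HP)].
  - left. exists mu. auto.
  - right. split; [exact Ha | split; [exists rho |]; auto].
Qed.

Lemma backward_match_A (a : act L) (nu : dist) :
  backward_match (NSum (NSum (NPre tau Qa) (NPre tau Pa)) Fa) a nu -> backward_match A a nu.
Proof.
  assert (HA : exists rho, psem Qa rho /\ step A tau rho).
  { destruct (psem_total Qa) as [rho HQa]. exists rho. split; [| apply step_A_tau]; assumption. }
  intros [(mu & Hmu & Hlift) | (Ha & _ & HPa)].
  - inversion Hmu as [| | ? ? ? ? Hmu' | ? ? ? ? HF]; subst.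
    + inversion Hmu' as [| | ? ? ? ? HQ | ? ? ? ? HP]; subst.
      * left. exists mu. split; [apply step_A_intro, st_suml, HQ | exact Hlift].
      * inversion HP; subst. right. split; [reflexivity | split; [exact HA | exists mu; auto]].
    + left. exists mu. split; [apply step_A_intro, st_sumr, HF | exact Hlift].
  - right. split; [exact Ha | split; [exact HA | exact HPa]].
Qed.

Lemma ctx_step_backward (G2 : nexpr) (a : act L) (nu : dist) :
  step G2 a nu -> forall G1, ctxN A B G1 G2 -> closedN G1 -> closedN G2 ->
  backward_match G1 a nu.
Proof.
  destruct ctx_unfold as (HQ & HP & HF).
  induction 1 as [a P2 nu Hnu | Y G2 a nu Hst IH | G2 H2 a nu Hst IH | G2 H2 a nu Hst IH];
    intros G1 Hctx Hc1 Hc2.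
  - inversion Hctx as [| | | ? P1 ? HP12 | |]; subst.
    destruct (psem_total P1) as [mu Hmu]. left. exists mu. split; [constructor; exact Hmu |].
    apply (psem_ctx_lift A B P1 P2); auto.
  - inversion Hctx as [| | | | ? G1' ? HG |]; subst.
    + (* Pair the unfolding of [B] with [A] substituted into the body of [B]: its
         summand [tau.Pa] is the one move of [B] that [A] lacks. *)
      apply backward_match_A, IH.
      * constructor; [constructor; constructor |]; assumption.
      * intros y Hy. apply (closed_A_unfold y). unfold Q in *. simpl in *. tauto.
      * exact closed_B_unfold.
    + apply (backward_match_mono (substN (subst_one Y (NRec Y G1')) G1')).
      * intros b rho Hrho. apply st_rec, Hrho.
      * apply IH.
        -- apply (ctx_subst_congr A B closed_A closed_B); [exact HG |].
           apply ctx_subst_one. constructor. exact HG.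
        -- apply closedN_subst_unfold; assumption.
        -- apply closedN_subst_unfold; assumption.
  - inversion Hctx as [| | | | | G1' ? H1' ? HG HH]; subst.
    apply (backward_match_mono G1'); [intros; apply st_suml; assumption |].
    apply IH; [exact HG | apply (closedN_sum_inv _ _ Hc1) | apply (closedN_sum_inv _ _ Hc2)].
  - inversion Hctx as [| | | | | G1' ? H1' ? HG HH]; subst.
    apply (backward_match_mono H1'); [intros; apply st_sumr; assumption |].
    apply IH; [exact HH | apply (closedN_sum_inv _ _ Hc1) | apply (closedN_sum_inv _ _ Hc2)].
Qed.

Lemma ctx_step_backward_weak (G1 G2 : nexpr) (a : act L) (nu : dist) :
  step G2 a nu -> ctx_closed A B G1 G2 ->
  exists rho mu, step G1 a rho /\ wtau rho mu /\ lift Rel mu nu.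
Proof.
  intros Hnu (Hctx & Hc1 & Hc2).
  destruct (ctx_step_backward G2 a nu Hnu G1 Hctx Hc1 Hc2)
    as [(mu & Hmu & Hlift) | (-> & (rho & HQa & Hrho) & (mu & HPa & Hlift))].
  - exists mu, mu. eauto using wtau_refl, step_subdist.
  - exists rho, mu. eauto using wtau_Qa_Pa.
Qed.

Lemma ctx_closed_is_wbisim : is_wbisim Rel.
Proof.
  intros G1 G2 HR. pose proof HR as (Hctx & Hc1 & Hc2).
  split; [exact Hc1 | split; [exact Hc2 | split]].
  - intros a mu Hmu.
    destruct (ctx_step_forward G1 a mu Hmu G2 Hctx Hc1 Hc2) as (nu & Hnu & Hlift).
    exists nu. eauto using step_wtrans_hat, wtau_refl, step_subdist.
  - intros a nu Hnu.
    destruct (ctx_step_backward_weak G1 G2 a nu Hnu HR) as (rho & mu & Hrho & Hw & Hlift).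
    exists mu. eauto using step_wtrans_hat.
Qed.

Lemma A_rcong_B : rcong_closed A B.
Proof.
  assert (Hbisim : forall G1 G2, Rel G1 G2 -> wbisim G1 G2).
  { intros G1 G2 HR. exists Rel. split; [exact ctx_closed_is_wbisim | exact HR]. }
  assert (HR : Rel A B) by (split; [constructor | split; assumption]).
  split.
  - intros a mu Hmu.
    destruct (ctx_step_forward A a mu Hmu B (ctx_hole A B) closed_A closed_B)
      as (nu & Hnu & Hlift).
    exists nu. split; [| exact (lift_mono _ _ _ _ Hbisim Hlift)].
    eauto using step_wtrans, wtau_refl, step_subdist.
  - intros a nu Hnu.
    destruct (ctx_step_backward_weak A B a nu Hnu HR) as (rho & mu & Hrho & Hw & Hlift).
    exists mu. split; [eauto using step_wtrans | exact (lift_mono _ _ _ _ Hbisim Hlift)].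
Qed.

End Unfolding.

Theorem mainTheorem4 (L V : Type) (E F : nexpr L V) (P : pexpr L V) (X : V)
  (p : R) (hp : 0 < p < 1) :
  rcong
    (NRec X (NSum (NPre tau (PChoice (PDirac (NSum (NVar X) E)) P (exist _ p hp))) F))
    (NRec X (NSum (NSum (NPre tau (PChoice (PDirac (NSum (NVar X) E)) P (exist _ p hp)))
                        (NPre tau P)) F)).
Proof.
  intros sigma Hsigma.
  match goal with |- rcong_closed ?GA ?GB =>
    assert (HA : closedN GA) by apply (closedN_subst_all _ _ Hsigma);
    assert (HB : closedN GB) by apply (closedN_subst_all _ _ Hsigma)
  end.
  simpl in *. rewrite eqdec_refl in *.
  exact (A_rcong_B X _ _ _ _ HA HB).
Qed.
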